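(* Let $F$ be a field of characteristic $\neq 2$ and let $a,b\in F^*$ be such that the quadratic form $\langle 1,a,b,-ab\rangle$ is not weakly isotropic over $F$. Let $t\in F^*$ be a nonzero sum of squares in $F$. Then $\langle 1,a,b,-ab\rangle$ is not weakly isotropic over $F(\sqrt{t})$.
   Context: All fields have characteristic different from $2$; quadratic forms are finite-dimensional and nondegenerate. For a form $q$ and an integer $m\geq 1$, $m\times q$ denotes the orthogonal sum of $m$ copies of $q$. A form $q$ over $F$ is called weakly isotropic if $m\times q$ is isotropic for some integer $m\geq 1$. *)

From HB Require Import structures.
From mathcomp Require Import all_boot all_order all_algebra.
Set Implicit Arguments. Unset Strict Implicit. Unset Printing Implicit Defensive.
Import Order.TTheory GRing.Theory Num.Theory.
Local Open Scope ring_scope.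

(* A diagonal quadratic form <c_0, ..., c_{n-1}> over a field K is
   represented by its sequence of (nonzero) diagonal coefficients. *)

Definition diag_isotropic (K : fieldType) (q : seq K) : Prop :=
  exists v : seq K,
    [/\ size v = size q, has (fun x => x != 0) v &
        \sum_(i < size q) q`_i * v`_i ^+ 2 = 0].

(* m x q : orthogonal sum of m copies of q (concatenation of diagonals). *)
Definition mult_form (K : fieldType) (m : nat) (q : seq K) : seq K :=
  flatten (nseq m q).

Definition weakly_isotropic (K : fieldType) (q : seq K) : Prop :=
  exists m : nat, (0 < m)%N /\ diag_isotropic (mult_form m q).

Definition sum_of_squares (K : fieldType) (t : K) : Prop :=
  exists s : seq K, t = \sum_(x <- s) x ^+ 2.

Definition form_1abab (K : fieldType) (a b : K) : seq K :=
  [:: 1; a; b; - (a * b)].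

From HB Require Import structures.
From mathcomp Require Import all_boot all_order all_algebra ring.
Import Order.TTheory GRing.Theory Num.Theory.
Set Implicit Arguments. Unset Strict Implicit.
Local Open Scope ring_scope.

(* Write an isotropic vector of m x q over F(sqrt t) as v = x + y sqrt t with x, y
   over F. Then q(v) = (q(x) + t q(y)) + 2 B(x, y) sqrt t. If 2 B(x, y) != 0,
   sqrt t already lies in F and v is an isotropic vector over F. Otherwise
   q(x) + t q(y) = 0, and writing t = u_1^2 + ... + u_k^2 turns this into
   q(x) + q(u_1 y) + ... + q(u_k y) = 0: the nonzero vector (x, u_1 y, ..., u_k y)
   is isotropic for (k + 1) m x q over F. Neither the shape <1, a, b, -ab> of the
   form nor the characteristic plays any role. *)

Fixpoint qform (K : fieldType) (c v : seq K) : K :=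
  if (c, v) is (c0 :: c', v0 :: v') then c0 * v0 ^+ 2 + qform c' v' else 0.

Fixpoint bform (K : fieldType) (c x y : seq K) : K :=
  if (c, x, y) is (c0 :: c', x0 :: x', y0 :: y') then c0 * x0 * y0 + bform c' x' y'
  else 0.

Notation nonzero := (fun z => z != 0).

Lemma qform_sum (K : fieldType) (c v : seq K) : size v = size c ->
  \sum_(i < size c) c`_i * v`_i ^+ 2 = qform c v.
Proof.
elim: c v => [|c0 c IH] [|v0 v] //=; first by rewrite big_ord0.
by move=> [] sz_v; rewrite big_ord_recl IH.
Qed.

Lemma diag_isotropicP (K : fieldType) (c : seq K) : diag_isotropic c <->
  exists v, [/\ size v = size c, has nonzero v & qform c v = 0].
Proof.
by split=> -[v [sz_v nz_v q_v]]; exists v; rewrite (qform_sum sz_v) in q_v *.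
Qed.

Lemma qform_cat (K : fieldType) (c1 c2 v1 v2 : seq K) : size v1 = size c1 ->
  qform (c1 ++ c2) (v1 ++ v2) = qform c1 v1 + qform c2 v2.
Proof.
elim: c1 v1 => [|c0 c IH] [|v0 v] //=; first by rewrite add0r.
by move=> [] sz_v; rewrite IH // addrA.
Qed.

Lemma qform_map (K L : fieldType) (f : {rmorphism K -> L}) (c v : seq K) :
  qform (map f c) (map f v) = f (qform c v).
Proof.
elim: c v => [|c0 c IH] [|v0 v] /=; rewrite ?rmorph0 //.
by rewrite IH rmorphD rmorphM rmorphXn.
Qed.

Lemma qformZ (K : fieldType) (u : K) (c v : seq K) :
  qform c (map ( *%R u) v) = u ^+ 2 * qform c v.
Proof.
elim: c v => [|c0 c IH] [|v0 v] /=; rewrite ?mulr0 //.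
by rewrite IH mulrDr exprMn mulrCA.
Qed.

Lemma mult_formS (K : fieldType) (n : nat) (c : seq K) :
  mult_form n.+1 c = c ++ mult_form n c.
Proof. by []. Qed.

Lemma mult_formM (K : fieldType) (n m : nat) (c : seq K) :
  mult_form n (mult_form m c) = mult_form (n * m) c.
Proof.
elim: n => [|n IH] //.
by rewrite mult_formS IH mulSn /mult_form nseqD flatten_cat.
Qed.

Lemma mult_form_map (K L : fieldType) (f : K -> L) (n : nat) (c : seq K) :
  mult_form n (map f c) = map f (mult_form n c).
Proof. by elim: n => [|n IH] //; rewrite !mult_formS IH map_cat. Qed.

Lemma weakly_isotropic_mult_form (K : fieldType) (m : nat) (c : seq K) :
  (0 < m)%N -> weakly_isotropic (mult_form m c) -> weakly_isotropic c.
Proof.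
move=> m_gt0 [n [n_gt0 iso]]; exists (n * m)%N.
by rewrite muln_gt0 n_gt0 m_gt0 -mult_formM.
Qed.

Lemma diag_isotropic_weakly (K : fieldType) (c : seq K) :
  diag_isotropic c -> weakly_isotropic c.
Proof. by exists 1%N; rewrite /mult_form /= cats0. Qed.

Section ScaledCopies.

Variables (K : fieldType) (y : seq K).

Definition scaled_copies (us : seq K) : seq K :=
  flatten [seq map ( *%R u) y | u <- us].

Lemma size_scaled_copies (c us : seq K) : size y = size c ->
  size (scaled_copies us) = size (mult_form (size us) c).
Proof.
move=> sz_y; elim: us => [|u us IH] //=.
by rewrite mult_formS !size_cat size_map sz_y -IH.
Qed.

Lemma qform_scaled_copies (c us : seq K) : size y = size c ->
  qform (mult_form (size us) c) (scaled_copies us)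
  = (\sum_(u <- us) u ^+ 2) * qform c y.
Proof.
move=> sz_y; elim: us => [|u us IH] /=; first by rewrite big_nil mul0r.
by rewrite mult_formS qform_cat ?size_map // IH qformZ big_cons mulrDl.
Qed.

Lemma has_scaled_copies (us : seq K) :
  \sum_(u <- us) u ^+ 2 != 0 -> has nonzero y -> has nonzero (scaled_copies us).
Proof.
move=> nz_sum /hasP [z y_z nz_z]; elim: us nz_sum => [|u us IH] /=.
  by rewrite big_nil eqxx.
rewrite big_cons has_cat; have [->|nz_u] := eqVneq u 0.
  by rewrite expr0n add0r => /IH ->; rewrite orbT.
move=> _; rewrite has_map; apply/orP; left.
by apply/hasP; exists z; rewrite //= mulf_neq0.
Qed.

End ScaledCopies.

Lemma weakly_isotropic_sos_pair (K : fieldType) (c x y : seq K) (t : K) :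
  sum_of_squares t -> t != 0 -> size x = size c -> size y = size c ->
  has nonzero x || has nonzero y -> qform c x + t * qform c y = 0 ->
  weakly_isotropic c.
Proof.
move=> [us ->] nz_t sz_x sz_y nz_xy q_xy; exists (size us).+1; split=> //.
apply/diag_isotropicP; exists (x ++ scaled_copies y us); split.
- by rewrite mult_formS !size_cat (size_scaled_copies _ sz_y) sz_x.
- rewrite has_cat; case/orP: nz_xy => [-> //|nz_y].
  by rewrite has_scaled_copies ?orbT.
- by rewrite mult_formS qform_cat // qform_scaled_copies.
Qed.

Section QuadraticExtension.

Variables (F L : fieldType) (iota : {rmorphism F -> L}) (t : F) (s : L).
Hypothesis sqr_s : s ^+ 2 = iota t.
Hypothesis gen_s : forall z : L, exists x y : F, z = iota x + iota y * s.

Definition embed2 (x y : seq F) : seq L :=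
  [seq iota p.1 + iota p.2 * s | p <- zip x y].

Lemma embed2_surj (v : seq L) :
  exists x y : seq F, [/\ size x = size v, size y = size v & v = embed2 x y].
Proof.
elim: v => [|z v [x [y [sz_x sz_y vE]]]]; first by exists [::], [::].
have [x0 [y0 ->]] := gen_s z.
by exists (x0 :: x), (y0 :: y); rewrite /= sz_x sz_y vE.
Qed.

Lemma has_embed2 (x y : seq F) :
  has nonzero (embed2 x y) -> has nonzero x || has nonzero y.
Proof.
elim: x y => [|x0 x IH] [|y0 y] //=.
have [->|] := eqVneq x0 0; have [->|] := eqVneq y0 0; rewrite ?orbT //=.
by rewrite !rmorph0 mul0r addr0 eqxx; apply: IH.
Qed.

Lemma qform_embed2 (c x y : seq F) : size x = size c -> size y = size c ->
  qform (map iota c) (embed2 x y)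
  = iota (qform c x + t * qform c y) + iota (2 * bform c x y) * s.
Proof.
elim: c x y => [|c0 c IH] [|x0 x] [|y0 y] //=.
  by rewrite !(mulr0, addr0, rmorph0, mul0r).
move=> [] sz_x [] sz_y; rewrite IH // !(rmorphD, rmorphM, rmorphXn) ?rmorph_nat.
by rewrite -sqr_s; ring.
Qed.

Lemma weakly_isotropic_descent (c : seq F) :
  sum_of_squares t -> t != 0 ->
  diag_isotropic (map iota c) -> weakly_isotropic c.
Proof.
move=> sos_t nz_t /diag_isotropicP [v [sz_v nz_v]].
rewrite size_map in sz_v; have [x [y [sz_x sz_y vE]]] := embed2_surj v.
rewrite sz_v in sz_x sz_y; subst v.
rewrite qform_embed2 //; set A := qform c x + _; set B := 2 * bform _ _ _ => q_v.
have [B0|nz_B] := eqVneq B 0.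
  apply: (weakly_isotropic_sos_pair sos_t nz_t sz_x sz_y (has_embed2 nz_v)).
  by apply: (fmorph_inj iota); rewrite rmorph0 -q_v B0 rmorph0 mul0r addr0.
have s_in_F : s = iota (- A / B).
  have nz_iB : iota B != 0 by rewrite fmorph_eq0.
  apply: (mulfI nz_iB); rewrite -rmorphM [B * _]mulrC divfK // rmorphN.
  by apply/eqP; rewrite -addr_eq0 addrC q_v.
pose w := [seq p.1 + p.2 * (- A / B) | p <- zip x y].
have v_in_F : embed2 x y = map iota w.
  rewrite /embed2 -map_comp; apply: eq_map => -[x0 y0] /=.
  by rewrite s_in_F -rmorphM -rmorphD.
apply/diag_isotropic_weakly/diag_isotropicP; exists w; split.
- by rewrite size_map size_zip sz_x sz_y minnn.
- move: nz_v; rewrite v_in_F has_map; apply: sub_has => z.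
  by apply: contra => /eqP ->; rewrite rmorph0.
- by apply: (fmorph_inj iota); rewrite rmorph0 -qform_map -v_in_F qform_embed2 // q_v.
Qed.

End QuadraticExtension.

Theorem lemma2p2 (F : fieldType) (a b t : F)
  (hchar : (2 : F) != 0) (ha : a != 0) (hb : b != 0)
  (hnwi : ~ weakly_isotropic (form_1abab a b))
  (ht0 : t != 0) (hts : sum_of_squares t)
  (L : fieldType) (iota : {rmorphism F -> L}) (s : L)
  (hs : s ^+ 2 = iota t)
  (hgen : forall z : L, exists x y : F, z = iota x + iota y * s) :
  ~ weakly_isotropic (map iota (form_1abab a b)).
Proof.
move=> [m [m_gt0 iso]]; apply: hnwi.
apply: (weakly_isotropic_mult_form m_gt0).
rewrite mult_form_map in iso.
exact: (weakly_isotropic_descent hs hgen hts ht0 iso).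
Qed.
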